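(* Under the standing setup, assume that $f$ is bounded, i.e. $\sup_{q\in\mathcal P}\|f_q\|_\infty<\infty$ (which implies $\sup_{q\in\mathcal P}\|q\|<\infty$). Let $\Sigma=(\Sigma(t))_{t\ge0}$ be the Nisio semigroup of $(\mathcal P,0)$, i.e. the Nisio semigroup constructed with $f_q$ replaced by $0$ for all $q\in\mathcal P$. Then $s\mapsto\Sigma(s)v$ is continuous for every $v\in\mathbb R^d$, and for all $u_0\in\mathbb R^d$ and $t\ge0$, $\mathscr S(t)u_0-u_0\le\int_0^t\Sigma(s)\mathcal Qu_0\,ds$ (componentwise).
   Context: Standing setup: $d\in\mathbb N$; vectors in $\mathbb R^d$ with $\|u\|_\infty=\max_i|u_i|$; $\|a\|$ is the operator norm of $a\in\mathbb R^{d\times d}$ w.r.t. $\|\cdot\|_\infty$; inequalities, integrals and suprema of vectors are componentwise; reals are identified with constant vectors. A $Q$-matrix is $q\in\mathbb R^{d\times d}$ with $q_{ii}\le0$, $q_{ij}\ge0$ ($i\ne j$), $\sum_jq_{ij}=0$. Let $\mathcal P$ be a set of $Q$-matrices and $f=(f_q)_{q\in\mathcal P}\subset\mathbb R^d$ with $\sup_{q\in\mathcal P}f_q=f_{q_0}=0$ for some $q_0\in\mathcal P$, such that $\mathcal Qu:=\sup_{q\in\mathcal P}(qu+f_q)$ is finite for every $u\in\mathbb R^d$. For $q\in\mathcal P$, $t\ge0$: $S_q(t)u_0:=e^{tq}u_0+\int_0^te^{sq}f_q\,ds$. For $h\ge0$: $\mathcal E_hu_0:=\sup_{q\in\mathcal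 P}S_q(h)u_0$. $P$ is the set of finite subsets $\pi\subset[0,\infty)$ with $0\in\pi$; $P_t:=\{\pi\in P:\max\pi=t\}$. For $\pi=\{t_0,\dots,t_m\}$ with $0=t_0<\dots<t_m$, $m\ge1$, $\mathcal E_\pi:=\mathcal E_{t_1-t_0}\circ\cdots\circ\mathcal E_{t_m-t_{m-1}}$, and $\mathcal E_{\{0\}}:=\mathcal E_0$. The Nisio semigroup of $(\mathcal P,f)$ is $\mathscr S(t)u_0:=\sup_{\pi\in P_t}\mathcal E_\pi u_0$. *)

From Stdlib Require Import Reals Lra List Factorial ClassicalEpsilon.
Import ListNotations.
Open Scope R_scope.

(* Vectors in R^d are represented as nat -> R (only indices i < d matter),
   d x d matrices as nat -> nat -> R (only indices i, j < d matter). *)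
Definition vec := nat -> R.
Definition mat := nat -> nat -> R.

Fixpoint rsum (n : nat) (g : nat -> R) : R :=
  match n with O => 0 | S m => rsum m g + g m end.

Definition mv (d : nat) (q : mat) (u : vec) : vec :=
  fun i => rsum d (fun j => q i j * u j).

Fixpoint mpowv (d : nat) (q : mat) (k : nat) (u : vec) : vec :=
  match k with O => u | S k' => mv d q (mpowv d q k' u) end.

Definition Qmatrix (d : nat) (q : mat) : Prop :=
  (forall i, (i < d)%nat -> q i i <= 0) /\
  (forall i j, (i < d)%nat -> (j < d)%nat -> i <> j -> 0 <= q i j) /\
  (forall i, (i < d)%nat -> rsum d (q i) = 0).

Definition rlim (u : nat -> R) : R :=
  epsilon (inhabits 0) (fun l => Un_cv u l).

Definition mexpv (d : nat) (t : R) (q : mat) (u : vec) : vec :=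
  fun i => rlim (fun N => sum_f_R0 (fun k => t ^ k / INR (fact k) * mpowv d q k u i) N).

Definition rint (g : R -> R) (a b : R) : R :=
  epsilon (inhabits 0) (fun I => exists pr : Riemann_integrable g a b, RiemannInt pr = I).

Definition vsup (F : vec -> Prop) : vec :=
  fun i => epsilon (inhabits 0) (fun m => is_lub (fun x => exists v, F v /\ x = v i) m).

Definition Sq (d : nat) (q : mat) (fq : vec) (t : R) (u0 : vec) : vec :=
  fun i => mexpv d t q u0 i + rint (fun s => mexpv d s q fq i) 0 t.

Definition Eh (d : nat) (P : mat -> Prop) (f : mat -> vec) (h : R) (u0 : vec) : vec :=
  vsup (fun v => exists q, P q /\ v = Sq d q (f q) h u0).

Definition Qop (d : nat) (P : mat -> Prop) (f : mat -> vec) (u : vec) : vec :=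
  vsup (fun v => exists q, P q /\ v = (fun i => mv d q u i + f q i)).

(* A partition pi = {0 = t_0 < t_1 < ... < t_m} is represented by the list
   [t_1; ...; t_m] (empty list <-> pi = {0}). *)
Fixpoint incr (prev : R) (l : list R) : Prop :=
  match l with [] => True | x :: r => prev < x /\ incr x r end.

Definition is_part (t : R) (l : list R) : Prop := incr 0 l /\ last l 0 = t.

Fixpoint Epi_aux (d : nat) (P : mat -> Prop) (f : mat -> vec)
    (prev : R) (l : list R) (u : vec) : vec :=
  match l with
  | [] => u
  | x :: r => Eh d P f (x - prev) (Epi_aux d P f x r u)
  end.

Definition Epi (d : nat) (P : mat -> Prop) (f : mat -> vec) (l : list R) (u : vec) : vec :=
  match l with
  | [] => Eh d P f 0 u
  | _ => Epi_aux d P f 0 l u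
  end.

Definition Nisio (d : nat) (P : mat -> Prop) (f : mat -> vec) (t : R) (u0 : vec) : vec :=
  vsup (fun v => exists l, is_part t l /\ v = Epi d P f l u0).

(** For a Q-matrix q the semigroup e^{tq} is positive and conservative
    (e^{tq} 1 = 1), so every S_q(h), hence every E_h and every E_pi, is monotone
    and commutes with adding constants.  Without the source terms, E_{a+b} <= E_a E_b,
    so refining a partition can only increase E_pi; consequently Sigma(t) v is
    Lipschitz in t with constant sup_q |q v|, and e^{hq} Sigma(s) v <= Sigma(h+s) v.
    Now S_q(h) u0 - u0 = int_0^h e^{sq} (q u0 + f_q) ds <= int_0^h Sigma(s) Q u0 ds,
    and E_h (u + int_0^r Sigma(s) w ds) <= E_h u + int_h^{h+r} Sigma(s) w ds;
    chaining these along a partition pi of [0, t] gives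
    E_pi u0 <= u0 + int_0^t Sigma(s) Q u0 ds, and taking the supremum over pi
    proves the theorem. *)

From Stdlib Require Import Reals Lra Lia List Factorial ClassicalEpsilon Classical.
From Coquelicot Require Import Coquelicot.
Import ListNotations.
Open Scope R_scope.

(** * Finite sums *)

Lemma rsum_ext n g h : (forall j, (j < n)%nat -> g j = h j) -> rsum n g = rsum n h.
Proof.
  induction n; simpl; intros H; auto.
  rewrite IHn, H; auto; intros; apply H; lia.
Qed.

Lemma rsum_plus n g h : rsum n (fun j => g j + h j) = rsum n g + rsum n h.
Proof. induction n; simpl; [lra | rewrite IHn; lra]. Qed.

Lemma rsum_scal n c g : rsum n (fun j => c * g j) = c * rsum n g.
Proof. induction n; simpl; [lra | rewrite IHn; lra]. Qed.

Lemma rsum_opp n g : rsum n (fun j => - g j) = - rsum n g.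
Proof. induction n; simpl; [lra | rewrite IHn; lra]. Qed.

Lemma rsum_zero n : rsum n (fun _ => 0) = 0.
Proof. induction n; simpl; [lra | rewrite IHn; lra]. Qed.

Lemma rsum_le n g h : (forall j, (j < n)%nat -> g j <= h j) -> rsum n g <= rsum n h.
Proof.
  induction n; simpl; intros H; [lra |].
  assert (g n <= h n) by (apply H; lia).
  assert (rsum n g <= rsum n h) by (apply IHn; intros; apply H; lia).
  lra.
Qed.

Lemma rsum_nonneg n g : (forall j, (j < n)%nat -> 0 <= g j) -> 0 <= rsum n g.
Proof. intros H; rewrite <- (rsum_zero n); apply rsum_le; auto. Qed.

Lemma Rabs_rsum_le n g : Rabs (rsum n g) <= rsum n (fun j => Rabs (g j)).
Proof.
  induction n; simpl; [rewrite Rabs_R0; lra |].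
  eapply Rle_trans; [apply Rabs_triang | lra].
Qed.

Lemma rsum_term_le n g j :
  (forall k, (k < n)%nat -> 0 <= g k) -> (j < n)%nat -> g j <= rsum n g.
Proof.
  induction n; intros H Hj; [lia |]; simpl.
  destruct (Nat.eq_dec j n) as [-> | Hne].
  - assert (0 <= rsum n g) by (apply rsum_nonneg; intros; apply H; lia); lra.
  - assert (g j <= rsum n g) by (apply IHn; [intros; apply H; lia | lia]).
    assert (0 <= g n) by (apply H; lia); lra.
Qed.

Lemma rsum_delta n i c : (i < n)%nat ->
  rsum n (fun j => if Nat.eq_dec i j then c else 0) = c.
Proof.
  induction n; intros Hi; [lia |]; simpl.
  destruct (Nat.eq_dec i n) as [-> | Hne].
  - rewrite (rsum_ext n _ (fun _ => 0)), rsum_zero; [lra |].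
    intros j Hj; destruct (Nat.eq_dec n j); [lia | auto].
  - rewrite IHn by lia; lra.
Qed.

Lemma rsum_swap n m g :
  rsum n (fun i => rsum m (fun j => g i j)) = rsum m (fun j => rsum n (fun i => g i j)).
Proof. induction n; simpl; [rewrite rsum_zero; auto | rewrite IHn, <- rsum_plus; auto]. Qed.

Lemma sum_f_R0_rsum_swap N n (g : nat -> nat -> R) :
  sum_f_R0 (fun k => rsum n (fun j => g j k)) N = rsum n (fun j => sum_f_R0 (fun k => g j k) N).
Proof. induction N; simpl; auto; rewrite IHN, <- rsum_plus; auto. Qed.

Lemma Un_cv_rsum n (s : nat -> nat -> R) (l : nat -> R) :
  (forall j, (j < n)%nat -> Un_cv (s j) (l j)) ->
  Un_cv (fun N => rsum n (fun j => s j N)) (rsum n l).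
Proof.
  induction n; simpl; intros H.
  - intros e He; exists O; intros; rewrite R_dist_eq; lra.
  - apply CV_plus; [apply IHn; intros |]; apply H; lia.
Qed.

Lemma is_derive_rsum n (g g' : nat -> R -> R) x :
  (forall j, (j < n)%nat -> is_derive (g j) x (g' j x)) ->
  is_derive (fun y => rsum n (fun j => g j y)) x (rsum n (fun j => g' j x)).
Proof.
  induction n; simpl; intros H.
  - apply (is_derive_const 0).
  - apply (is_derive_plus (fun y => rsum n (fun j => g j y)) (g n));
      [apply IHn; intros |]; apply H; lia.
Qed.

Lemma RInt_rsum n (g : nat -> R -> R) a b :
  (forall j, (j < n)%nat -> ex_RInt (g j) a b) ->
  ex_RInt (fun y => rsum n (fun j => g j y)) a b /\
  RInt (fun y => rsum n (fun j => g j y)) a b = rsum n (fun j => RInt (g j) a b).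
Proof.
  induction n; simpl; intros H.
  - split; [apply ex_RInt_const |].
    rewrite RInt_const; unfold scal; simpl; unfold mult; simpl; lra.
  - destruct IHn as [Hex Heq]; [intros; apply H; lia |].
    assert (Hn : ex_RInt (g n) a b) by (apply H; lia).
    split; [apply (ex_RInt_plus (fun y => rsum n (fun j => g j y)) (g n)); auto |].
    rewrite (RInt_plus (fun y => rsum n (fun j => g j y)) (g n)), Heq by auto; reflexivity.
Qed.

(** * The exponential series *)

Section Exponential.
Variable d : nat.

Lemma mv_ext q u v i : (forall j, (j < d)%nat -> u j = v j) -> mv d q u i = mv d q v i.
Proof. intros H; apply rsum_ext; intros; rewrite H; auto. Qed.

Lemma mpowv_ext q k u v i : (forall j, (j < d)%nat -> u j = v j) -> (i < d)%nat ->
  mpowv d q k u i = mpowv d q k v i.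
Proof. intros H; revert i; induction k; simpl; intros i Hi; auto; apply mv_ext; auto. Qed.

Lemma mpowv_mv q k u : mpowv d q k (mv d q u) = mpowv d q (S k) u.
Proof. induction k; simpl; auto; rewrite IHk; reflexivity. Qed.

Definition vnorm1 (u : vec) := rsum d (fun j => Rabs (u j)).
Definition mnorm1 (q : mat) := rsum d (fun a => rsum d (fun b => Rabs (q a b))).

Lemma vnorm1_ge u j : (j < d)%nat -> Rabs (u j) <= vnorm1 u.
Proof. intros; apply (rsum_term_le d (fun j => Rabs (u j))); auto; intros; apply Rabs_pos. Qed.

Lemma vnorm1_nonneg u : 0 <= vnorm1 u.
Proof. apply rsum_nonneg; intros; apply Rabs_pos. Qed.

Lemma mnorm1_nonneg q : 0 <= mnorm1 q.
Proof. apply rsum_nonneg; intros; apply rsum_nonneg; intros; apply Rabs_pos. Qed.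

Lemma vnorm1_mv q u : vnorm1 (mv d q u) <= mnorm1 q * vnorm1 u.
Proof.
  unfold vnorm1 at 1, mnorm1; rewrite Rmult_comm, <- rsum_scal.
  apply rsum_le; intros a Ha.
  eapply Rle_trans; [apply Rabs_rsum_le |]; rewrite <- rsum_scal.
  apply rsum_le; intros b Hb; rewrite Rabs_mult, (Rmult_comm (vnorm1 u)).
  apply Rmult_le_compat_l; [apply Rabs_pos | apply vnorm1_ge; auto].
Qed.

Lemma vnorm1_mpowv q k u : vnorm1 (mpowv d q k u) <= mnorm1 q ^ k * vnorm1 u.
Proof.
  induction k; simpl; [lra |].
  eapply Rle_trans; [apply vnorm1_mv |]; rewrite Rmult_assoc.
  apply Rmult_le_compat_l; auto; apply mnorm1_nonneg.
Qed.

Definition mexp_coef q u i k := mpowv d q k u i / INR (fact k).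

Lemma pow_div_fact_le_exp x n : 0 <= x -> x ^ n / INR (fact n) <= exp x.
Proof.
  intros Hx.
  set (s := fun N => sum_f_R0 (fun k => / INR (fact k) * x ^ k) N).
  assert (Hterm : forall k, 0 <= / INR (fact k) * x ^ k).
  { intros k; apply Rmult_le_pos; [left; apply Rinv_0_lt_compat, INR_fact_lt_0 | apply pow_le; auto]. }
  assert (Hcv : Un_cv s (exp x)).
  { pose proof (is_exp_Reals x) as H; apply is_pseries_Reals in H.
    intros e He; destruct (H e He) as [N HN]; exists N; intros; apply HN; auto. }
  assert (Hgrow : Un_growing s) by (intros m; unfold s; rewrite tech5; specialize (Hterm (S m)); lra).
  pose proof (growing_ineq _ _ Hgrow Hcv n).
  assert (x ^ n / INR (fact n) <= s n).
  { unfold s; destruct n; [simpl; unfold Rdiv; lra |]; rewrite tech5.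
    assert (0 <= sum_f_R0 (fun k => / INR (fact k) * x ^ k) n) by (apply cond_pos_sum; auto).
    unfold Rdiv; rewrite (Rmult_comm (x ^ S n)); lra. }
  lra.
Qed.

Lemma mexp_coef_bound q u i k x : (i < d)%nat ->
  Rabs (mexp_coef q u i k * x ^ k) <= vnorm1 u * exp (mnorm1 q * Rabs x).
Proof.
  intros Hi; unfold mexp_coef.
  rewrite Rabs_mult, Rabs_div, <- RPow_abs by apply not_0_INR, fact_neq_0.
  rewrite (Rabs_right (INR _)) by (left; apply INR_fact_lt_0).
  assert (Hpow : Rabs (mpowv d q k u i) <= mnorm1 q ^ k * vnorm1 u)
    by (eapply Rle_trans; [apply vnorm1_ge; auto | apply vnorm1_mpowv]).
  assert (Hexp : (mnorm1 q * Rabs x) ^ k / INR (fact k) <= exp (mnorm1 q * Rabs x))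
    by (apply pow_div_fact_le_exp, Rmult_le_pos; [apply mnorm1_nonneg | apply Rabs_pos]).
  rewrite Rpow_mult_distr in Hexp.
  assert (Hf : 0 < / INR (fact k)) by (apply Rinv_0_lt_compat, INR_fact_lt_0).
  unfold Rdiv in *.
  apply Rle_trans with (mnorm1 q ^ k * vnorm1 u * / INR (fact k) * Rabs x ^ k).
  { apply Rmult_le_compat_r; [apply pow_le, Rabs_pos | apply Rmult_le_compat_r; lra]. }
  replace (mnorm1 q ^ k * vnorm1 u * / INR (fact k) * Rabs x ^ k)
    with (vnorm1 u * (mnorm1 q ^ k * Rabs x ^ k * / INR (fact k))) by ring.
  apply Rmult_le_compat_l; auto; apply vnorm1_nonneg.
Qed.

Lemma CV_radius_mexp_coef q u i : (i < d)%nat -> CV_radius (mexp_coef q u i) = p_infty.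
Proof.
  intros Hi; destruct (CV_radius_bounded (mexp_coef q u i)) as [Hub _].
  assert (Hall : forall r : R, Rbar_le r (CV_radius (mexp_coef q u i))).
  { intros r; apply Hub; exists (vnorm1 u * exp (mnorm1 q * Rabs r)).
    intros n; apply mexp_coef_bound; auto. }
  destruct (CV_radius (mexp_coef q u i)) eqn:E; auto.
  - specialize (Hall (r + 1)); simpl in Hall; lra.
  - specialize (Hall 0); simpl in Hall; contradiction.
Qed.

Lemma rlim_eq s l : Un_cv s l -> rlim s = l.
Proof.
  intros H; apply (UL_sequence s); auto.
  apply (epsilon_spec (inhabits 0) (fun l => Un_cv s l)); exists l; auto.
Qed.

Lemma Un_cv_mexp_PSeries t q u i : (i < d)%nat ->
  Un_cv (fun N => sum_f_R0 (fun k => t ^ k / INR (fact k) * mpowv d q k u i) N)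
        (PSeries (mexp_coef q u i) t).
Proof.
  intros Hi.
  assert (Hin : Rbar_lt (Rabs t) (CV_radius (mexp_coef q u i)))
    by (rewrite CV_radius_mexp_coef; simpl; auto).
  pose proof (Series_correct _ (CV_radius_inside _ _ Hin)) as Hex.
  apply is_lim_seq_Reals in Hex.
  replace (PSeries (mexp_coef q u i) t)
    with (Series (fun k => scal (pow_n t k) (mexp_coef q u i k))).
  2: { apply Series_ext; intros k; rewrite (pow_n_pow t k).
       change (scal (t ^ k) (mexp_coef q u i k)) with (t ^ k * mexp_coef q u i k); ring. }
  intros e He; destruct (Hex e He) as [N HN]; exists N; intros n Hn.
  specialize (HN n Hn); rewrite <- sum_n_Reals.
  replace (sum_n (fun k => t ^ k / INR (fact k) * mpowv d q k u i) n)
    with (sum_n (fun k => scal (pow_n t k) (mexp_coef q u i k)) n).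
  - exact HN.
  - apply sum_n_ext; intros k; rewrite pow_n_pow.
    unfold scal; simpl; unfold mult, mexp_coef; simpl; unfold Rdiv; ring.
Qed.

Lemma mexpv_PSeries t q u i : (i < d)%nat -> mexpv d t q u i = PSeries (mexp_coef q u i) t.
Proof. intros Hi; apply rlim_eq, Un_cv_mexp_PSeries; auto. Qed.

Lemma Un_cv_mexpv t q u i : (i < d)%nat ->
  Un_cv (fun N => sum_f_R0 (fun k => t ^ k / INR (fact k) * mpowv d q k u i) N)
        (mexpv d t q u i).
Proof. intros Hi; rewrite mexpv_PSeries; auto; apply Un_cv_mexp_PSeries; auto. Qed.

Lemma is_derive_mexpv t q u i : (i < d)%nat ->
  is_derive (fun s => mexpv d s q u i) t (mexpv d t q (mv d q u) i).
Proof.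
  intros Hi; apply (is_derive_ext (PSeries (mexp_coef q u i))).
  { intros; rewrite mexpv_PSeries; auto. }
  rewrite mexpv_PSeries; auto.
  replace (PSeries (mexp_coef q (mv d q u) i) t) with (PSeries (PS_derive (mexp_coef q u i)) t).
  - apply is_derive_PSeries; rewrite CV_radius_mexp_coef; simpl; auto.
  - apply PSeries_ext; intros n; unfold PS_derive, mexp_coef.
    rewrite mpowv_mv, fact_simpl, mult_INR.
    field; split; [apply not_0_INR, fact_neq_0 | apply not_0_INR; lia].
Qed.

Lemma continuous_mexpv t q u i : (i < d)%nat -> continuous (fun s => mexpv d s q u i) t.
Proof.
  intros Hi; apply (@ex_derive_continuous R_AbsRing R_NormedModule).
  eexists; apply is_derive_mexpv; auto.
Qed.

Lemma mexpv_0 q u i : (i < d)%nat -> mexpv d 0 q u i = u i.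
Proof. intros Hi; rewrite mexpv_PSeries, PSeries_0; auto; unfold mexp_coef; simpl; field. Qed.

(* Every linear identity between the iterates q^k u passes to the limit. *)
Lemma mexpv_lincomb t q u i n (c : nat -> R) (w : nat -> vec) (idx : nat -> nat) :
  (i < d)%nat -> (forall j, (j < n)%nat -> (idx j < d)%nat) ->
  (forall k, mpowv d q k u i = rsum n (fun j => c j * mpowv d q k (w j) (idx j))) ->
  mexpv d t q u i = rsum n (fun j => c j * mexpv d t q (w j) (idx j)).
Proof.
  intros Hi Hidx H; eapply UL_sequence; [apply Un_cv_mexpv; auto |].
  eapply Un_cv_ext.
  2: { apply (Un_cv_rsum n (fun j N => c j * sum_f_R0
          (fun k => t ^ k / INR (fact k) * mpowv d q k (w j) (idx j)) N)).
       intros j Hj; apply CV_mult; [| apply Un_cv_mexpv; auto].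
       intros e He; exists O; intros; rewrite R_dist_eq; auto. }
  intros N; simpl.
  transitivity (rsum n (fun j => sum_f_R0
    (fun k => c j * (t ^ k / INR (fact k) * mpowv d q k (w j) (idx j))) N)).
  { apply rsum_ext; intros j _; rewrite scal_sum; apply sum_eq; intros; ring. }
  rewrite <- sum_f_R0_rsum_swap; apply sum_eq; intros k _.
  rewrite H, <- rsum_scal; apply rsum_ext; intros; ring.
Qed.

Definition unit_vec (j : nat) : vec := fun k => if Nat.eq_dec j k then 1 else 0.

Lemma mv_lin q u v a b i :
  mv d q (fun j => a * u j + b * v j) i = a * mv d q u i + b * mv d q v i.
Proof. unfold mv; rewrite <- !rsum_scal, <- rsum_plus; apply rsum_ext; intros; ring. Qed.

Lemma mpowv_lin q k u v a b i :
  mpowv d q k (fun j => a * u j + b * v j) i = a * mpowv d q k u i + b * mpowv d q k v i.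
Proof. revert i; induction k; simpl; intros i; auto; rewrite <- mv_lin; apply mv_ext; auto. Qed.

Lemma mpowv_unit_vec q k v i : (i < d)%nat ->
  mpowv d q k v i = rsum d (fun j => v j * mpowv d q k (unit_vec j) i).
Proof.
  revert i; induction k; simpl; intros i Hi.
  - rewrite (rsum_ext d _ (fun j => if Nat.eq_dec i j then v i else 0)), rsum_delta; auto.
    intros j Hj; unfold unit_vec.
    destruct (Nat.eq_dec j i), (Nat.eq_dec i j); subst; try lia; ring.
  - unfold mv.
    rewrite (rsum_ext d _ (fun l => q i l * rsum d (fun j => v j * mpowv d q k (unit_vec j) l)))
      by (intros; rewrite IHk; auto).
    rewrite (rsum_ext d (fun j => v j * _)
      (fun j => rsum d (fun l => q i l * (v j * mpowv d q k (unit_vec j) l))))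
      by (intros j Hj; rewrite <- rsum_scal; apply rsum_ext; intros; ring).
    rewrite <- rsum_swap; apply rsum_ext; intros; rewrite <- rsum_scal; auto.
Qed.

Lemma mexpv_lin t q u v a b i : (i < d)%nat ->
  mexpv d t q (fun j => a * u j + b * v j) i = a * mexpv d t q u i + b * mexpv d t q v i.
Proof.
  intros Hi.
  rewrite (mexpv_lincomb t q _ i 2 (fun j => match j with O => a | _ => b end)
     (fun j => match j with O => u | _ => v end) (fun _ => i)); auto.
  - simpl; ring.
  - intros k; rewrite mpowv_lin; simpl; ring.
Qed.

Lemma mexpv_ext t q u v i : (i < d)%nat -> (forall j, (j < d)%nat -> u j = v j) ->
  mexpv d t q u i = mexpv d t q v i.
Proof.
  intros Hi H; rewrite (mexpv_lincomb t q u i 1 (fun _ => 1) (fun _ => v) (fun _ => i)); auto.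
  - simpl; ring.
  - intros k; simpl; rewrite (mpowv_ext q k u v); auto; ring.
Qed.

Lemma mexpv_mv_comm t q u i : (i < d)%nat ->
  mexpv d t q (mv d q u) i = mv d q (fun j => mexpv d t q u j) i.
Proof.
  intros Hi; apply (mexpv_lincomb t q _ i d (fun j => q i j) (fun _ => u) (fun j => j)); auto.
  intros k; rewrite mpowv_mv; reflexivity.
Qed.

Lemma mexpv_unit_vec t q v i : (i < d)%nat ->
  mexpv d t q v i = rsum d (fun j => v j * mexpv d t q (unit_vec j) i).
Proof.
  intros Hi; apply (mexpv_lincomb t q _ i d v unit_vec (fun _ => i)); auto.
  intros; apply mpowv_unit_vec; auto.
Qed.

Lemma mexpv_mv_unit_vec t q v i : (i < d)%nat ->
  mexpv d t q (mv d q v) i = rsum d (fun j => v j * mexpv d t q (mv d q (unit_vec j)) i).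
Proof.
  intros Hi; apply (mexpv_lincomb t q _ i d v (fun j => mv d q (unit_vec j)) (fun _ => i)); auto.
  intros k; rewrite !mpowv_mv, mpowv_unit_vec; auto.
  apply rsum_ext; intros; rewrite mpowv_mv; auto.
Qed.

Lemma mexpv_zero t q u i : (i < d)%nat -> (forall j, (j < d)%nat -> u j = 0) ->
  mexpv d t q u i = 0.
Proof.
  intros Hi H; rewrite (mexpv_ext t q u (fun j => 0 * u j + 0 * u j)), mexpv_lin; auto.
  - ring.
  - intros; rewrite H; auto; ring.
Qed.

Lemma is_derive_mexpv_rev t c q u i : (i < d)%nat ->
  is_derive (fun s => mexpv d (c - s) q u i) t (- mexpv d (c - t) q (mv d q u) i).
Proof.
  intros Hi.
  assert (Hlin : is_derive (fun s : R => c - s) t (-1)) by (auto_derive; auto; ring).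
  pose proof (is_derive_comp (fun s => mexpv d s q u i) (fun s => c - s) t _ _
                (is_derive_mexpv (c - t) q u i Hi) Hlin) as H.
  unfold scal in H; simpl in H; unfold mult in H; simpl in H.
  replace (- mexpv d (c - t) q (mv d q u) i) with (-1 * mexpv d (c - t) q (mv d q u) i) by ring.
  exact H.
Qed.

Lemma is_derive_mexpv_shift t b q u i : (i < d)%nat ->
  is_derive (fun s => mexpv d (s + b) q u i) t (mexpv d (t + b) q (mv d q u) i).
Proof.
  intros Hi.
  assert (Hlin : is_derive (fun s : R => s + b) t 1) by (auto_derive; auto; ring).
  pose proof (is_derive_comp (fun s => mexpv d s q u i) (fun s => s + b) t _ _
                (is_derive_mexpv (t + b) q u i Hi) Hlin) as H.
  unfold scal in H; simpl in H; unfold mult in H; simpl in H.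
  rewrite Rmult_1_l in H; exact H.
Qed.

Lemma derive_zero_constant (g : R -> R) :
  (forall x, is_derive g x 0) -> forall x y, g x = g y.
Proof.
  intros Hd.
  assert (Hl : forall x, derivable_pt_lim g x 0) by (intros; apply is_derive_Reals; auto).
  set (pr := fun x => exist (fun l => derivable_pt_lim g x l) 0 (Hl x) : derivable_pt g x).
  assert (K : forall x y, x < y -> g x = g y)
    by (intros x y Hxy; destruct (MVT_cor1 g x y pr Hxy) as [z [Hz _]]; simpl in Hz; lra).
  intros x y; destruct (Rtotal_order x y) as [H | [H | H]];
    [apply K | subst | symmetry; apply K]; auto.
Qed.

(* [s |-> sum_j (e^{(c-s)q})_{ij} phi_j(s)] has derivative zero, and equals
   [0] at [s = 0] and [phi_i(c)] at [s = c]. *)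
Lemma linear_ode_unique q (phi : R -> vec) :
  (forall a i, (i < d)%nat -> is_derive (fun s => phi s i) a (mv d q (phi a) i)) ->
  (forall i, (i < d)%nat -> phi 0 i = 0) ->
  forall c i, (i < d)%nat -> phi c i = 0.
Proof.
  intros Hd H0 c i Hi.
  set (psi := fun a => rsum d (fun j => mexpv d (c - a) q (unit_vec j) i * phi a j)).
  assert (Hpsi : forall a, is_derive psi a 0).
  { intros a; unfold psi.
    pose proof (is_derive_rsum d (fun j y => mexpv d (c - y) q (unit_vec j) i * phi y j)
       (fun j y => - mexpv d (c - y) q (mv d q (unit_vec j)) i * phi y j
                   + mexpv d (c - y) q (unit_vec j) i * mv d q (phi y) j) a) as Hs.
    assert (E : rsum d (fun j => - mexpv d (c - a) q (mv d q (unit_vec j)) i * phi a j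
                   + mexpv d (c - a) q (unit_vec j) i * mv d q (phi a) j) = 0).
    { rewrite rsum_plus.
      rewrite (rsum_ext d _ (fun j => - (phi a j * mexpv d (c - a) q (mv d q (unit_vec j)) i)))
        by (intros; ring).
      rewrite rsum_opp, <- mexpv_mv_unit_vec; auto.
      rewrite (rsum_ext d _ (fun j => mv d q (phi a) j * mexpv d (c - a) q (unit_vec j) i))
        by (intros; ring).
      rewrite <- mexpv_unit_vec; auto; ring. }
    cbv beta in Hs; rewrite E in Hs; apply Hs; intros j Hj.
    apply (is_derive_mult (fun y => mexpv d (c - y) q (unit_vec j) i) (fun y => phi y j)).
    - apply is_derive_mexpv_rev; auto.
    - apply Hd; auto.
    - intros; apply Rmult_comm. }
  assert (E0 : psi 0 = 0).
  { unfold psi; rewrite (rsum_ext d _ (fun _ => 0)); [apply rsum_zero |].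
    intros j Hj; rewrite H0; auto; ring. }
  assert (Ec : psi c = phi c i).
  { unfold psi; rewrite (rsum_ext d _ (fun j => if Nat.eq_dec i j then phi c i else 0)).
    - apply rsum_delta; auto.
    - intros j Hj; replace (c - c) with 0 by ring; rewrite mexpv_0; auto; unfold unit_vec.
      destruct (Nat.eq_dec j i), (Nat.eq_dec i j); subst; try lia; ring. }
  rewrite <- Ec, <- E0; apply derive_zero_constant; auto.
Qed.

Lemma mexpv_add a b q u i : (i < d)%nat ->
  mexpv d (a + b) q u i = mexpv d a q (fun j => mexpv d b q u j) i.
Proof.
  intros Hi; set (v := fun j => mexpv d b q u j).
  set (phi := fun s (k : nat) => mexpv d s q v k - mexpv d (s + b) q u k).
  enough (Hz : phi a i = 0) by (unfold phi, v in *; lra).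
  apply (linear_ode_unique q phi); auto.
  - intros s k Hk; unfold phi.
    apply (is_derive_ext (fun y => minus (mexpv d y q v k) (mexpv d (y + b) q u k)));
      [reflexivity |].
    replace (mv d q (fun k0 => mexpv d s q v k0 - mexpv d (s + b) q u k0) k)
      with (minus (mexpv d s q (mv d q v) k) (mexpv d (s + b) q (mv d q u) k)).
    + apply (@is_derive_minus R_AbsRing R_NormedModule);
        [apply is_derive_mexpv | apply is_derive_mexpv_shift]; auto.
    + rewrite (mv_ext q _ (fun k0 => 1 * mexpv d s q v k0 + (-1) * mexpv d (s + b) q u k0))
        by (intros; ring).
      rewrite mv_lin, !mexpv_mv_comm; auto; unfold minus, plus, opp; simpl.
      unfold mv; cbv beta; ring.
  - intros k Hk; unfold phi, v; rewrite mexpv_0, Rplus_0_l; auto; ring.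
Qed.

End Exponential.

(** * Positivity and conservativity for Q-matrices *)

Section QMatrix.
Variable d : nat.

Definition diag_abs_sum (q : mat) := rsum d (fun k => Rabs (q k k)).
Definition mshift (q : mat) : mat :=
  fun i j => q i j + (if Nat.eq_dec i j then diag_abs_sum q else 0).

Lemma mv_mshift q v i : (i < d)%nat -> mv d (mshift q) v i = mv d q v i + diag_abs_sum q * v i.
Proof.
  intros Hi; unfold mv, mshift.
  rewrite (rsum_ext d _ (fun j => q i j * v j + (if Nat.eq_dec i j then diag_abs_sum q * v i else 0))).
  - rewrite rsum_plus, rsum_delta; auto.
  - intros j Hj; destruct (Nat.eq_dec i j); subst; ring.
Qed.

Lemma mshift_nonneg q i j : Qmatrix d q -> (i < d)%nat -> (j < d)%nat -> 0 <= mshift q i j.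
Proof.
  intros [Hdiag [Hoff _]] Hi Hj; unfold mshift; destruct (Nat.eq_dec i j).
  - subst; assert (Rabs (q j j) <= diag_abs_sum q)
      by (apply (rsum_term_le d (fun k => Rabs (q k k))); auto; intros; apply Rabs_pos).
    assert (- q j j <= Rabs (q j j)) by (rewrite <- Rabs_Ropp; apply RRle_abs); lra.
  - assert (0 <= q i j) by (apply Hoff; auto); lra.
Qed.

Lemma mexpv_mshift_nonneg t q u i : Qmatrix d q -> 0 <= t ->
  (forall l, (l < d)%nat -> 0 <= u l) -> (i < d)%nat -> 0 <= mexpv d t (mshift q) u i.
Proof.
  intros HQ Ht Hu Hi.
  assert (Hpow : forall k j, (j < d)%nat -> 0 <= mpowv d (mshift q) k u j).
  { induction k; simpl; intros j Hj; auto.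
    apply rsum_nonneg; intros; apply Rmult_le_pos; [apply mshift_nonneg | apply IHk]; auto. }
  eapply Rle_cv_lim with (Un := fun _ => 0); [| | apply Un_cv_mexpv; auto].
  - intros n; apply cond_pos_sum; intros k; apply Rmult_le_pos; auto.
    unfold Rdiv; apply Rmult_le_pos;
      [apply pow_le; auto | left; apply Rinv_0_lt_compat, INR_fact_lt_0].
  - intros e He; exists O; intros; rewrite R_dist_eq; auto.
Qed.

(* [e^{tq} = e^{-ct} e^{t(q + cI)}], obtained from [linear_ode_unique]. *)
Lemma mexpv_nonneg t q u i : Qmatrix d q -> 0 <= t ->
  (forall l, (l < d)%nat -> 0 <= u l) -> (i < d)%nat -> 0 <= mexpv d t q u i.
Proof.
  intros HQ Ht Hu Hi; set (c := diag_abs_sum q).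
  set (phi := fun s (k : nat) => mexpv d s q u k - exp (- c * s) * mexpv d s (mshift q) u k).
  assert (Hz : phi t i = 0).
  { apply (linear_ode_unique d q phi); auto.
    - intros s k Hk; unfold phi.
      assert (He : is_derive (fun y => exp (- c * y)) s (- c * exp (- c * s)))
        by (auto_derive; auto; ring).
      apply (is_derive_ext (fun y => minus (mexpv d y q u k)
               (mult (exp (- c * y)) (mexpv d y (mshift q) u k)))); [reflexivity |].
      replace (mv d q (fun k0 => mexpv d s q u k0 - exp (- c * s) * mexpv d s (mshift q) u k0) k)
        with (minus (mexpv d s q (mv d q u) k)
           (plus (mult (- c * exp (- c * s)) (mexpv d s (mshift q) u k))
                 (mult (exp (- c * s)) (mexpv d s (mshift q) (mv d (mshift q) u) k)))).
      + apply (@is_derive_minus R_AbsRing R_NormedModule); [apply is_derive_mexpv; auto |].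
        apply (is_derive_mult (fun y => exp (- c * y)) (fun y => mexpv d y (mshift q) u k));
          auto; [apply is_derive_mexpv; auto | intros; apply Rmult_comm].
      + rewrite (mv_ext d q _ (fun k0 => 1 * mexpv d s q u k0
                   + (- exp (- c * s)) * mexpv d s (mshift q) u k0)) by (intros; ring).
        rewrite mv_lin, !mexpv_mv_comm, mv_mshift; auto.
        unfold minus, plus, opp, mult; simpl; fold c; unfold mv; cbv beta; ring.
    - intros k Hk; unfold phi; rewrite !mexpv_0, Rmult_0_r, exp_0; auto; ring. }
  unfold phi in Hz.
  assert (0 <= exp (- c * t) * mexpv d t (mshift q) u i)
    by (apply Rmult_le_pos; [left; apply exp_pos | apply mexpv_mshift_nonneg; auto]).
  lra.
Qed.

Lemma mexpv_one t q i : Qmatrix d q -> (i < d)%nat -> mexpv d t q (fun _ => 1) i = 1.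
Proof.
  intros [_ [_ Hrow]] Hi; eapply UL_sequence; [apply Un_cv_mexpv; auto |].
  assert (Hk : forall k, mpowv d q (S k) (fun _ => 1) i = 0).
  { intros k; rewrite <- mpowv_mv, (mpowv_ext d q k _ (fun _ => 0)); auto.
    - clear Hi; revert i; induction k; simpl; intros; auto.
      unfold mv; rewrite (rsum_ext d _ (fun _ => 0)); [apply rsum_zero |].
      intros; rewrite IHk; ring.
    - intros j Hj; unfold mv; rewrite (rsum_ext d _ (q j)); [apply Hrow; auto | intros; ring]. }
  intros e He; exists O; intros n _; replace (sum_f_R0 _ n) with 1; [rewrite R_dist_eq; auto |].
  induction n; [simpl; field | rewrite tech5, <- IHn, Hk; ring].
Qed.

Lemma mexpv_const t q c i : Qmatrix d q -> (i < d)%nat -> mexpv d t q (fun _ => c) i = c.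
Proof.
  intros HQ Hi; rewrite (mexpv_ext d t q _ (fun j => c * 1 + 0 * 1)), mexpv_lin, mexpv_one;
    auto; [ring | intros; ring].
Qed.

Lemma mexpv_add_const t q u c i : Qmatrix d q -> (i < d)%nat ->
  mexpv d t q (fun j => u j + c) i = mexpv d t q u i + c.
Proof.
  intros HQ Hi; rewrite (mexpv_ext d t q _ (fun j => 1 * u j + 1 * c)), mexpv_lin, mexpv_const;
    auto; [ring | intros; ring].
Qed.

Lemma mexpv_mono t q u v i : Qmatrix d q -> 0 <= t ->
  (forall l, (l < d)%nat -> u l <= v l) -> (i < d)%nat -> mexpv d t q u i <= mexpv d t q v i.
Proof.
  intros HQ Ht H Hi.
  assert (0 <= mexpv d t q (fun j => 1 * v j + (-1) * u j) i)
    by (apply mexpv_nonneg; auto; intros l Hl; specialize (H l Hl); lra).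
  rewrite mexpv_lin in H0; auto; lra.
Qed.

Lemma mexpv_le_const t q u m i : Qmatrix d q -> 0 <= t ->
  (forall l, (l < d)%nat -> u l <= m) -> (i < d)%nat -> mexpv d t q u i <= m.
Proof. intros; rewrite <- (mexpv_const t q m i); auto; apply mexpv_mono; auto. Qed.

Lemma mexpv_ge_const t q u m i : Qmatrix d q -> 0 <= t ->
  (forall l, (l < d)%nat -> m <= u l) -> (i < d)%nat -> m <= mexpv d t q u i.
Proof. intros; rewrite <- (mexpv_const t q m i); auto; apply mexpv_mono; auto. Qed.

Lemma mexpv_sub_le t q u C i : Qmatrix d q -> 0 <= t ->
  (forall l, (l < d)%nat -> Rabs (mv d q u l) <= C) -> (i < d)%nat ->
  Rabs (mexpv d t q u i - u i) <= C * t.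
Proof.
  intros HQ Ht HC Hi; destruct Ht as [Ht | <-].
  2: { rewrite mexpv_0, Rminus_diag, Rabs_R0; auto; lra. }
  assert (Hl : forall x, derivable_pt_lim (fun s => mexpv d s q u i) x (mexpv d x q (mv d q u) i))
    by (intros; apply is_derive_Reals, is_derive_mexpv; auto).
  set (pr := fun x => exist (fun l => derivable_pt_lim (fun s => mexpv d s q u i) x l) _ (Hl x)
     : derivable_pt (fun s => mexpv d s q u i) x).
  destruct (MVT_cor1 (fun s => mexpv d s q u i) 0 t pr Ht) as [z [Hz Hz2]].
  simpl in Hz; rewrite mexpv_0 in Hz; auto; rewrite Hz.
  rewrite Rabs_mult, Rminus_0_r, (Rabs_right t) by lra.
  apply Rmult_le_compat_r; [lra |].
  apply Rabs_le; split; [apply mexpv_ge_const | apply mexpv_le_const]; auto; try lra;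
    intros l Hl'; specialize (HC l Hl'); apply Rabs_le_between in HC; lra.
Qed.

End QMatrix.

(** * Suprema and integrals *)

Lemma vsup_is_lub (F : vec -> Prop) i B : (exists v, F v) -> (forall v, F v -> v i <= B) ->
  is_lub (fun x => exists v, F v /\ x = v i) (vsup F i).
Proof.
  intros [v0 H0] HB; unfold vsup.
  apply (epsilon_spec (inhabits 0) (fun m => is_lub (fun x => exists v, F v /\ x = v i) m)).
  destruct (completeness (fun x => exists v, F v /\ x = v i)) as [m Hm].
  - exists B; intros x [v [Hv ->]]; auto.
  - exists (v0 i), v0; auto.
  - exists m; auto.
Qed.

Lemma vsup_ub (F : vec -> Prop) i B v : (forall v, F v -> v i <= B) -> F v -> v i <= vsup F i.
Proof. intros HB Hv; destruct (vsup_is_lub F i B) as [H _]; eauto. Qed.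

Lemma vsup_le (F : vec -> Prop) i B : (exists v, F v) -> (forall v, F v -> v i <= B) ->
  vsup F i <= B.
Proof.
  intros Hne HB; destruct (vsup_is_lub F i B) as [_ H]; auto.
  apply H; intros x [v [Hv ->]]; auto.
Qed.

Lemma vsup_approx (F : vec -> Prop) i B e : (exists v, F v) -> (forall v, F v -> v i <= B) ->
  0 < e -> exists v, F v /\ vsup F i - e < v i.
Proof.
  intros Hne HB He; apply NNPP; intros Hn.
  assert (vsup F i <= vsup F i - e); [| lra].
  apply vsup_le; auto; intros v Hv; apply Rnot_lt_le; intros Hl; apply Hn; exists v; auto.
Qed.

Lemma rint_RInt g a b : ex_RInt g a b -> rint g a b = RInt g a b.
Proof.
  intros H; pose proof (ex_RInt_Reals_0 _ _ _ H) as pr; unfold rint.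
  destruct (epsilon_spec (inhabits 0)
    (fun I => exists pr : Riemann_integrable g a b, RiemannInt pr = I)) as [pr' Hp].
  - exists (RiemannInt pr), pr; auto.
  - rewrite <- Hp, <- RInt_Reals; auto.
Qed.


Lemma limit1_in_lipschitz (g : R -> R) (D : R -> Prop) K x0 : 0 <= K ->
  (forall x, D x -> Rabs (g x - g x0) <= K * Rabs (x - x0)) -> limit1_in g D (g x0) x0.
Proof.
  intros HK H eps Heps; exists (eps / (K + 1)); split; [apply Rdiv_lt_0_compat; lra |].
  intros x [Hx Hxd]; simpl in *; unfold R_dist in *.
  eapply Rle_lt_trans; [apply H; auto |].
  apply Rle_lt_trans with (K * (eps / (K + 1))); [apply Rmult_le_compat_l; lra |].
  apply Rlt_le_trans with ((K + 1) * (eps / (K + 1)));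
    [apply Rmult_lt_compat_r; [apply Rdiv_lt_0_compat |]; lra | right; field; lra].
Qed.

Lemma RInt_shift (g : R -> R) h r : ex_RInt g h (h + r) ->
  ex_RInt (fun y => g (y + h)) 0 r /\ RInt (fun y => g (y + h)) 0 r = RInt g h (h + r).
Proof.
  intros H.
  replace h with (1 * 0 + h) in H at 1 by ring; replace (h + r) with (1 * r + h) in H by ring.
  assert (Hg : forall y, scal 1 (g (1 * y + h)) = g (y + h))
    by (intros y; unfold scal; simpl; unfold mult; simpl; rewrite Rmult_1_l; f_equal; ring).
  split.
  - apply (ex_RInt_ext (fun y => scal 1 (g (1 * y + h)))); [intros; apply Hg |].
    apply (@ex_RInt_comp_lin R_NormedModule); auto.
  - rewrite <- (RInt_ext (fun y => scal 1 (g (1 * y + h)))) by (intros; apply Hg).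
    rewrite (@RInt_comp_lin R_CompleteNormedModule) by auto; f_equal; ring.
Qed.

(** * Partitions *)

Lemma last_default (l : list R) a b : l <> [] -> last l a = last l b.
Proof. induction l; intros H; [congruence |]; destruct l; simpl; auto; apply IHl; discriminate. Qed.

Lemma last_cons (x : R) r p : last (x :: r) p = last r x.
Proof.
  destruct r as [| y r']; [reflexivity |].
  transitivity (last (y :: r') p); [reflexivity | apply last_default; discriminate].
Qed.

Lemma last_app (l1 l2 : list R) p : last (l1 ++ l2) p = last l2 (last l1 p).
Proof. revert p; induction l1; intros p; [reflexivity |]; rewrite <- app_comm_cons, !last_cons; auto. Qed.

Lemma incr_gt p l y : incr p l -> In y l -> p < y.
Proof.
  revert p; induction l; simpl; intros p H Hy; [contradiction |].
  destruct H as [H1 H2]; destruct Hy as [-> | Hy]; auto; specialize (IHl a H2 Hy); lra.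
Qed.

Lemma incr_last_ge p l : incr p l -> p <= last l p.
Proof.
  revert p; induction l; intros p H; [simpl; lra |].
  destruct H as [H1 H2]; rewrite last_cons; specialize (IHl a H2); lra.
Qed.

Lemma incr_le_last p l y : incr p l -> In y l -> y <= last l p.
Proof.
  revert p; induction l; intros p H Hy; [contradiction |].
  destruct H as [H1 H2]; rewrite last_cons.
  destruct Hy as [-> | Hy]; [apply incr_last_ge | apply IHl]; auto.
Qed.

Lemma incr_app p l1 l2 : incr p (l1 ++ l2) <-> incr p l1 /\ incr (last l1 p) l2.
Proof.
  revert p; induction l1; intros p; [simpl; tauto |].
  rewrite <- app_comm_cons, last_cons; cbn [incr]; rewrite IHl1; tauto.
Qed.

Lemma incr_last_eq_nil p l : incr p l -> last l p = p -> l = [].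
Proof.
  intros H1 H2; destruct l as [| r l]; auto.
  assert (r <= last (r :: l) p) by (apply incr_le_last; simpl; auto).
  destruct H1; lra.
Qed.

Lemma incr_map_shift p l h : incr p l -> incr (p + h) (map (fun y => y + h) l).
Proof. revert p; induction l; simpl; intros p H; auto; destruct H; split; [lra | auto]. Qed.

Lemma last_map_shift p l h : last (map (fun y => y + h) l) (p + h) = last l p + h.
Proof. revert p; induction l; intros p; [reflexivity |]; cbn [map]; rewrite !last_cons; auto. Qed.

Lemma is_part_exists t : 0 <= t -> exists l, is_part t l.
Proof. intros [Ht | <-]; [exists [t] | exists []]; split; simpl; auto. Qed.

Fixpoint ins (y : R) (l : list R) : list R :=
  match l with
  | [] => [y]
  | x :: r => if Rlt_dec y x then y :: x :: r
              else if Rlt_dec x y then x :: ins y r else x :: r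
  end.

Lemma incr_ins p l y : incr p l -> p < y -> incr p (ins y l).
Proof.
  revert p; induction l; simpl; intros p H Hy; auto.
  destruct H as [H1 H2]; destruct (Rlt_dec y a); simpl; auto.
  destruct (Rlt_dec a y); simpl; auto.
Qed.

Lemma In_ins l y z : In z l -> In z (ins y l).
Proof.
  induction l; simpl; intros H; [contradiction |].
  destruct (Rlt_dec y a); simpl; auto; destruct (Rlt_dec a y); simpl; auto; tauto.
Qed.

Lemma In_ins_self l y : In y (ins y l).
Proof.
  induction l; simpl; auto; destruct (Rlt_dec y a); simpl; auto.
  destruct (Rlt_dec a y); simpl; auto; left; lra.
Qed.

Lemma last_ins p l y : incr p l -> p < y -> y <= last l p -> last (ins y l) p = last l p.
Proof.
  revert p; induction l; intros p H Hy Hl; [simpl in Hl; lra |].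
  destruct H as [H1 H2]; cbn [ins].
  destruct (Rlt_dec y a); [rewrite !last_cons; reflexivity |].
  destruct (Rlt_dec a y); [| reflexivity].
  rewrite !last_cons; rewrite last_cons in Hl; auto.
Qed.

Lemma incr_common_refinement p a b : incr p a -> incr p b -> last a p = last b p ->
  exists c, incr p c /\ last c p = last a p /\
            (forall y, In y a -> In y c) /\ (forall y, In y b -> In y c).
Proof.
  intros Ha Hb Hlast.
  assert (Hrange : forall y, In y b -> p < y /\ y <= last a p)
    by (intros y Hy; split; [eapply incr_gt; eauto | rewrite Hlast; apply incr_le_last; auto]).
  clear Hb Hlast; revert a Ha Hrange.
  induction b as [| z b IHb]; intros a Ha Hrange.
  - exists a; repeat split; auto; intros y [].
  - destruct (Hrange z (or_introl eq_refl)) as [Hz1 Hz2].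
    destruct (IHb (ins z a)) as [c [Hc1 [Hc2 [Hc3 Hc4]]]].
    + apply incr_ins; auto.
    + intros y Hy; rewrite last_ins; auto; apply Hrange; simpl; auto.
    + exists c; repeat split; auto.
      * rewrite Hc2; apply last_ins; auto.
      * intros; apply Hc3, In_ins; auto.
      * intros y [<- | Hy]; [apply Hc3, In_ins_self | auto].
Qed.

Lemma split_at_In (p : R) (l : list R) x : In x l ->
  exists l1 l2, l = l1 ++ l2 /\ last l1 p = x.
Proof.
  intros H; destruct (in_split x l H) as [A [B ->]]; exists (A ++ [x]), B; split.
  - rewrite <- app_assoc; auto.
  - apply last_last.
Qed.

Lemma Epi_aux_app d P f p l1 l2 u :
  Epi_aux d P f p (l1 ++ l2) u = Epi_aux d P f p l1 (Epi_aux d P f (last l1 p) l2 u).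
Proof.
  revert p; induction l1; intros p; [reflexivity |].
  rewrite <- app_comm_cons; cbn [Epi_aux]; rewrite IHl1, last_cons; reflexivity.
Qed.

Lemma Epi_aux_map_shift d P f p l h u :
  Epi_aux d P f (p + h) (map (fun y => y + h) l) u = Epi_aux d P f p l u.
Proof.
  revert p; induction l; intros p; simpl; auto; rewrite IHl.
  replace (a + h - (p + h)) with (a - p) by ring; auto.
Qed.


(** * The operators S_q, E_h and E_pi *)

Notation zero_src := (fun (_ : mat) (_ : nat) => 0).

Section Operators.
Variable d : nat.

Lemma ex_RInt_mexpv q v i a b : (i < d)%nat -> ex_RInt (fun s => mexpv d s q v i) a b.
Proof.
  intros Hi; apply (@ex_RInt_continuous R_CompleteNormedModule); intros; apply continuous_mexpv; auto.
Qed.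

Lemma RInt_mexpv_mv q u i h : (i < d)%nat ->
  RInt (fun s => mexpv d s q (mv d q u) i) 0 h = mexpv d h q u i - u i.
Proof.
  intros Hi; apply is_RInt_unique.
  replace (mexpv d h q u i - u i) with (minus (mexpv d h q u i) (mexpv d 0 q u i))
    by (rewrite mexpv_0; auto).
  apply (@is_RInt_derive R_CompleteNormedModule (fun s => mexpv d s q u i)); intros;
    [apply is_derive_mexpv | apply continuous_mexpv]; auto.
Qed.

Lemma Sq_sub_RInt q fq h u0 i : (i < d)%nat ->
  Sq d q fq h u0 i - u0 i = RInt (fun s => mexpv d s q (fun j => mv d q u0 j + fq j) i) 0 h.
Proof.
  intros Hi; unfold Sq; rewrite rint_RInt by (apply ex_RInt_mexpv; auto).
  rewrite (RInt_ext (fun s => mexpv d s q (fun j => mv d q u0 j + fq j) i)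
    (fun s => plus (mexpv d s q (mv d q u0) i) (mexpv d s q fq i))).
  - rewrite (@RInt_plus R_CompleteNormedModule (fun s => mexpv d s q (mv d q u0) i)
      (fun s => mexpv d s q fq i)) by (apply ex_RInt_mexpv; auto).
    rewrite RInt_mexpv_mv; auto; unfold plus; simpl; ring.
  - intros x _; rewrite (mexpv_ext d x q _ (fun j => 1 * mv d q u0 j + 1 * fq j)), mexpv_lin;
      auto; [unfold plus; simpl; ring | intros; ring].
Qed.

Lemma Sq_0 q fq u i : (i < d)%nat -> Sq d q fq 0 u i = u i.
Proof.
  intros Hi; unfold Sq; rewrite rint_RInt, RInt_point, mexpv_0 by (auto; apply ex_RInt_mexpv; auto).
  unfold zero; simpl; ring.
Qed.

Lemma Sq_no_source q h u i : (i < d)%nat -> Sq d q (fun _ => 0) h u i = mexpv d h q u i.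
Proof.
  intros Hi; unfold Sq; rewrite rint_RInt by (apply ex_RInt_mexpv; auto).
  rewrite (RInt_ext _ (fun _ => 0)), RInt_const; [| intros; apply mexpv_zero; auto].
  unfold scal; simpl; unfold mult; simpl; ring.
Qed.

Lemma Sq_le_vnorm1 q fq h u i : Qmatrix d q -> 0 <= h ->
  (forall j, (j < d)%nat -> fq j <= 0) -> (i < d)%nat -> Sq d q fq h u i <= vnorm1 d u.
Proof.
  intros HQ Hh Hf Hi; unfold Sq; rewrite rint_RInt by (apply ex_RInt_mexpv; auto).
  assert (mexpv d h q u i <= vnorm1 d u).
  { apply mexpv_le_const; auto; intros l Hl.
    eapply Rle_trans; [apply RRle_abs | apply vnorm1_ge; auto]. }
  assert (RInt (fun s => mexpv d s q fq i) 0 h <= RInt (fun _ => 0) 0 h).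
  { apply RInt_le; auto; [apply ex_RInt_mexpv; auto | apply ex_RInt_const |].
    intros x Hx; apply mexpv_le_const; auto; lra. }
  rewrite RInt_const in H0; unfold scal in H0; simpl in H0; unfold mult in H0; simpl in H0; lra.
Qed.

Lemma Sq_add q fq h u z i : (i < d)%nat ->
  Sq d q fq h (fun j => u j + z j) i = Sq d q fq h u i + mexpv d h q z i.
Proof.
  intros Hi; unfold Sq; rewrite (mexpv_ext d h q _ (fun j => 1 * u j + 1 * z j)), mexpv_lin;
    auto; [ring | intros; ring].
Qed.

Variable P : mat -> Prop.
Variable q0 : mat.
Hypothesis HQ : forall q, P q -> Qmatrix d q.
Hypothesis Hq0 : P q0.

Section Source.
Variable f : mat -> vec.
Hypothesis Hfle : forall q, P q -> forall i, (i < d)%nat -> f q i <= 0.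

Lemma Sq_le_Eh h u i q : 0 <= h -> (i < d)%nat -> P q -> Sq d q (f q) h u i <= Eh d P f h u i.
Proof.
  intros Hh Hi Hq; apply (vsup_ub _ i (vnorm1 d u)).
  - intros v [q' [Hq' ->]]; apply Sq_le_vnorm1; auto.
  - exists q; auto.
Qed.

Lemma Eh_le h u i B : (i < d)%nat ->
  (forall q, P q -> Sq d q (f q) h u i <= B) -> Eh d P f h u i <= B.
Proof.
  intros Hi HB; apply vsup_le; [exists (Sq d q0 (f q0) h u), q0; auto |].
  intros v [q' [Hq' ->]]; auto.
Qed.

Lemma Eh_le_add_const h u v c i : 0 <= h -> (i < d)%nat ->
  (forall j, (j < d)%nat -> u j <= v j + c) -> Eh d P f h u i <= Eh d P f h v i + c.
Proof.
  intros Hh Hi H; apply Eh_le; auto; intros q Hq.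
  assert (mexpv d h q u i <= mexpv d h q (fun j => v j + c) i) by (apply mexpv_mono; auto).
  rewrite mexpv_add_const in H0; auto.
  assert (Sq d q (f q) h v i <= Eh d P f h v i) by (apply Sq_le_Eh; auto).
  unfold Sq in *; lra.
Qed.

Lemma Eh_mono h u v i : 0 <= h -> (i < d)%nat ->
  (forall j, (j < d)%nat -> u j <= v j) -> Eh d P f h u i <= Eh d P f h v i.
Proof.
  intros; rewrite <- (Rplus_0_r (Eh d P f h v i)); apply Eh_le_add_const; auto.
  intros; rewrite Rplus_0_r; auto.
Qed.

Lemma Eh_0 u i : (i < d)%nat -> Eh d P f 0 u i = u i.
Proof.
  intros Hi; apply Rle_antisym.
  - apply Eh_le; auto; intros; rewrite Sq_0; auto; lra.
  - rewrite <- (Sq_0 q0 (f q0) u i); auto; apply Sq_le_Eh; auto; lra.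
Qed.

Lemma Epi_aux_le_add_const p l u v c : incr p l -> (forall j, (j < d)%nat -> u j <= v j + c) ->
  forall i, (i < d)%nat -> Epi_aux d P f p l u i <= Epi_aux d P f p l v i + c.
Proof.
  revert p; induction l; simpl; intros p Hl H i Hi; auto.
  destruct Hl as [H1 H2]; apply Eh_le_add_const; auto; lra.
Qed.

Lemma Epi_Epi_aux l u i : (i < d)%nat -> Epi d P f l u i = Epi_aux d P f 0 l u i.
Proof. intros Hi; destruct l; simpl; auto; apply Eh_0; auto. Qed.

End Source.

Lemma zero_src_le : forall q, P q -> forall i, (i < d)%nat -> zero_src q i <= 0.
Proof. intros; lra. Qed.

Lemma mexpv_le_Eh0 h u i q : 0 <= h -> (i < d)%nat -> P q ->
  mexpv d h q u i <= Eh d P zero_src h u i.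
Proof. intros; rewrite <- Sq_no_source; auto; apply (Sq_le_Eh zero_src zero_src_le); auto. Qed.

Lemma Eh0_le h u i B : (i < d)%nat ->
  (forall q, P q -> mexpv d h q u i <= B) -> Eh d P zero_src h u i <= B.
Proof. intros; apply Eh_le; auto; intros; rewrite Sq_no_source; auto. Qed.

Lemma Eh_add_le (f : mat -> vec) h u z i :
  (forall q, P q -> forall i, (i < d)%nat -> f q i <= 0) -> 0 <= h -> (i < d)%nat ->
  Eh d P f h (fun j => u j + z j) i <= Eh d P f h u i + Eh d P zero_src h z i.
Proof.
  intros Hfle Hh Hi; apply Eh_le; auto; intros q Hq; rewrite Sq_add; auto.
  assert (Sq d q (f q) h u i <= Eh d P f h u i) by (apply Sq_le_Eh; auto).
  assert (mexpv d h q z i <= Eh d P zero_src h z i) by (apply mexpv_le_Eh0; auto).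
  lra.
Qed.

Lemma Eh0_sub_bounds h u C i : 0 <= h -> (i < d)%nat ->
  (forall q, P q -> forall l, (l < d)%nat -> Rabs (mv d q u l) <= C) ->
  u i - C * h <= Eh d P zero_src h u i <= u i + C * h.
Proof.
  intros Hh Hi HC; split.
  - pose proof (mexpv_sub_le d h q0 u C i (HQ q0 Hq0) Hh (HC q0 Hq0) Hi) as H.
    apply Rabs_le_between in H.
    assert (mexpv d h q0 u i <= Eh d P zero_src h u i) by (apply mexpv_le_Eh0; auto); lra.
  - apply Eh0_le; auto; intros q Hq.
    pose proof (mexpv_sub_le d h q u C i (HQ q Hq) Hh (HC q Hq) Hi) as H.
    apply Rabs_le_between in H; lra.
Qed.

Lemma Eh0_add_le_comp a b u i : 0 <= a -> 0 <= b -> (i < d)%nat ->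
  Eh d P zero_src (a + b) u i <= Eh d P zero_src a (Eh d P zero_src b u) i.
Proof.
  intros Ha Hb Hi; apply Eh0_le; auto; intros q Hq.
  rewrite mexpv_add; auto.
  eapply Rle_trans; [apply mexpv_mono; auto |]; [intros l Hl; apply (mexpv_le_Eh0 b u l q); auto |].
  apply mexpv_le_Eh0; auto.
Qed.


Lemma Epi_aux0_bounds p l u C : incr p l ->
  (forall q, P q -> forall l, (l < d)%nat -> Rabs (mv d q u l) <= C) ->
  forall i, (i < d)%nat ->
  u i - C * (last l p - p) <= Epi_aux d P zero_src p l u i <= u i + C * (last l p - p).
Proof.
  intros Hl HC; revert p Hl; induction l as [| x r IH]; intros p Hl i Hi; [simpl; lra |].
  destruct Hl as [H1 H2]; rewrite last_cons; cbn [Epi_aux]; specialize (IH x H2).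
  destruct (Eh0_sub_bounds (x - p) u C i) as [Hlo Hhi]; auto; [lra |].
  split.
  - assert (Eh d P zero_src (x - p) u i
            <= Eh d P zero_src (x - p) (Epi_aux d P zero_src x r u) i + C * (last r x - x)).
    { apply (Eh_le_add_const zero_src zero_src_le); auto; [lra |].
      intros j Hj; specialize (IH j Hj); lra. }
    lra.
  - assert (Eh d P zero_src (x - p) (Epi_aux d P zero_src x r u) i
            <= Eh d P zero_src (x - p) u i + C * (last r x - x)).
    { apply (Eh_le_add_const zero_src zero_src_le); auto; [lra |].
      intros j Hj; specialize (IH j Hj); lra. }
    lra.
Qed.

Lemma Eh0_le_Epi_aux p l w : incr p l -> forall i, (i < d)%nat ->
  Eh d P zero_src (last l p - p) w i <= Epi_aux d P zero_src p l w i.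
Proof.
  revert p; induction l as [| x r IH]; intros p Hl i Hi.
  - simpl; replace (p - p) with 0 by ring; rewrite (Eh_0 zero_src zero_src_le); auto; lra.
  - destruct Hl as [H1 H2]; rewrite last_cons; cbn [Epi_aux].
    assert (Hx : x <= last r x) by (apply incr_last_ge; auto).
    replace (last r x - p) with ((x - p) + (last r x - x)) by ring.
    eapply Rle_trans; [apply Eh0_add_le_comp; auto; lra |].
    apply (Eh_mono zero_src zero_src_le); auto; try lra; intros j Hj; apply IH; auto.
Qed.

Lemma Epi_aux0_refine p l : forall l', incr p l -> incr p l' -> last l p = last l' p ->
  (forall y, In y l -> In y l') ->
  forall u i, (i < d)%nat -> Epi_aux d P zero_src p l u i <= Epi_aux d P zero_src p l' u i.
Proof.
  revert p; induction l as [| x r IH]; intros p l' Hl Hl' Hlast Hin u i Hi.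
  - simpl in Hlast; symmetry in Hlast; rewrite (incr_last_eq_nil p l' Hl' Hlast); simpl; lra.
  - destruct (split_at_In p l' x (Hin x (or_introl eq_refl))) as [l1 [l2 [-> Hx]]].
    rewrite Epi_aux_app, Hx.
    apply incr_app in Hl'; destruct Hl' as [Hl1 Hl2]; rewrite Hx in Hl2.
    destruct Hl as [H1 H2]; cbn [Epi_aux].
    eapply Rle_trans; [| rewrite <- Hx at 1; apply Eh0_le_Epi_aux; auto].
    rewrite Hx; apply (Eh_mono zero_src zero_src_le); auto; [lra |].
    intros j Hj; apply IH; auto.
    + rewrite last_app, Hx, last_cons in Hlast; auto.
    + intros y Hy; assert (x < y) by apply (incr_gt x r y H2 Hy).
      specialize (Hin y (or_intror Hy)); apply in_app_or in Hin; destruct Hin as [Hin | Hin]; auto.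
      assert (y <= last l1 p) by (apply incr_le_last; auto); lra.
Qed.

Section Sigma.
Variable v : vec.
Variable C : R.
Hypothesis HC : forall q, P q -> forall l, (l < d)%nat -> Rabs (mv d q v l) <= C.

Lemma Epi_aux0_le_part t l i : (i < d)%nat -> is_part t l ->
  Epi_aux d P zero_src 0 l v i <= v i + C * t.
Proof.
  intros Hi [Hl1 Hl2]; pose proof (Epi_aux0_bounds 0 l v C Hl1 HC i Hi).
  rewrite Hl2 in H; lra.
Qed.

Lemma Epi_aux0_le_Nisio t l i : (i < d)%nat -> is_part t l ->
  Epi_aux d P zero_src 0 l v i <= Nisio d P zero_src t v i.
Proof.
  intros Hi Hl; rewrite <- (Epi_Epi_aux zero_src zero_src_le) by auto.
  apply (vsup_ub _ i (v i + C * t)); [| exists l; auto].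
  intros v' [l' [Hl' ->]]; rewrite (Epi_Epi_aux zero_src zero_src_le) by auto.
  apply (Epi_aux0_le_part t); auto.
Qed.

Lemma Nisio0_le t i B : 0 <= t -> (i < d)%nat ->
  (forall l, is_part t l -> Epi_aux d P zero_src 0 l v i <= B) -> Nisio d P zero_src t v i <= B.
Proof.
  intros Ht Hi HB; apply vsup_le.
  - destruct (is_part_exists t Ht) as [l Hl]; exists (Epi d P zero_src l v), l; auto.
  - intros v' [l [Hl ->]]; rewrite (Epi_Epi_aux zero_src zero_src_le); auto.
Qed.

Lemma Nisio0_0 i : (i < d)%nat -> Nisio d P zero_src 0 v i = v i.
Proof.
  intros Hi; apply Rle_antisym.
  - apply Nisio0_le; auto; [lra |].
    intros l [Hl1 Hl2]; rewrite (incr_last_eq_nil 0 l Hl1 Hl2); simpl; lra.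
  - change (v i) with (Epi_aux d P zero_src 0 [] v i); apply Epi_aux0_le_Nisio; auto.
    split; simpl; auto.
Qed.

(* Append the point [s + h] to a partition of [0, s]; the last step moves by at most [C h]. *)
Lemma Nisio0_le_add s h i : 0 <= s -> 0 <= h -> (i < d)%nat ->
  Nisio d P zero_src s v i <= Nisio d P zero_src (s + h) v i + C * h.
Proof.
  intros Hs Hh Hi; apply Nisio0_le; auto; intros l [Hl1 Hl2].
  destruct Hh as [Hh | <-].
  2: { rewrite Rplus_0_r, Rmult_0_r, Rplus_0_r; apply Epi_aux0_le_Nisio; auto; split; auto. }
  assert (Hp : is_part (s + h) (l ++ [s + h])).
  { split; [apply incr_app; split; auto; rewrite Hl2; simpl; split; auto; lra |].
    rewrite last_app; reflexivity. }
  eapply Rle_trans; [| apply Rplus_le_compat_r, (Epi_aux0_le_Nisio _ _ i Hi Hp)].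
  rewrite Epi_aux_app, Hl2; cbn [Epi_aux]; replace (s + h - s) with h by ring.
  apply (Epi_aux_le_add_const zero_src zero_src_le); auto.
  intros j Hj; destruct (Eh0_sub_bounds h v C j) as [Hlo _]; auto; lra.
Qed.

(* Refine a partition of [0, s + h] by [s]; the part beyond [s] moves by at most [C h]. *)
Lemma Nisio0_add_le s h i : 0 <= s -> 0 <= h -> (i < d)%nat ->
  Nisio d P zero_src (s + h) v i <= Nisio d P zero_src s v i + C * h.
Proof.
  intros Hs Hh Hi; apply Nisio0_le; auto; [lra |]; intros l [Hl1 Hl2].
  destruct Hs as [Hs | <-].
  2: { rewrite Nisio0_0; auto; pose proof (Epi_aux0_bounds 0 l v C Hl1 HC i Hi).
       rewrite Hl2 in H; lra. }
  set (l' := ins s l).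
  assert (Hl'1 : incr 0 l') by (apply incr_ins; auto).
  assert (Hl'2 : last l' 0 = s + h) by (unfold l'; rewrite last_ins; auto; lra).
  eapply Rle_trans.
  { apply (Epi_aux0_refine 0 l l'); auto; [rewrite Hl'2; auto | intros; apply In_ins; auto]. }
  destruct (split_at_In 0 l' s (In_ins_self l s)) as [l1 [l2 [E Hx]]].
  rewrite E in Hl'1, Hl'2 |- *; apply incr_app in Hl'1; destruct Hl'1 as [H1 H2].
  rewrite Hx in H2; rewrite Epi_aux_app, Hx.
  eapply Rle_trans; [| apply Rplus_le_compat_r, (Epi_aux0_le_Nisio s l1 i Hi); split; auto].
  apply (Epi_aux_le_add_const zero_src zero_src_le); auto.
  intros j Hj; pose proof (Epi_aux0_bounds s l2 v C H2 HC j Hj).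
  rewrite last_app, Hx in Hl'2; rewrite Hl'2 in H; lra.
Qed.

Lemma Nisio0_lipschitz s t i : 0 <= s -> 0 <= t -> (i < d)%nat ->
  Rabs (Nisio d P zero_src t v i - Nisio d P zero_src s v i) <= C * Rabs (t - s).
Proof.
  intros Hs Ht Hi; apply Rabs_le_between.
  destruct (Rle_dec s t).
  - rewrite Rabs_right by lra.
    pose proof (Nisio0_le_add s (t - s) i Hs ltac:(lra) Hi).
    pose proof (Nisio0_add_le s (t - s) i Hs ltac:(lra) Hi).
    replace (s + (t - s)) with t in * by ring; lra.
  - rewrite Rabs_left by lra.
    pose proof (Nisio0_le_add t (s - t) i Ht ltac:(lra) Hi).
    pose proof (Nisio0_add_le t (s - t) i Ht ltac:(lra) Hi).
    replace (t + (s - t)) with s in * by ring; lra.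
Qed.

(* Common refinements of near-optimal partitions, one coordinate at a time. *)
Lemma Nisio0_approx_part s e n : 0 <= s -> 0 < e -> (n <= d)%nat ->
  exists l, is_part s l /\
    forall j, (j < n)%nat -> Nisio d P zero_src s v j - e <= Epi_aux d P zero_src 0 l v j.
Proof.
  intros Hs He; induction n; intros Hn.
  - destruct (is_part_exists s Hs) as [l Hl]; exists l; split; auto; intros; lia.
  - destruct IHn as [l [[Hl1 Hl2] Hl3]]; [lia |].
    destruct (vsup_approx (fun v' => exists l, is_part s l /\ v' = Epi d P zero_src l v)
                n (v n + C * s) e) as [v' [[ln [[Hn1 Hn2] ->]] Hv']]; auto.
    { destruct (is_part_exists s Hs) as [l0 Hl0]; exists (Epi d P zero_src l0 v), l0; auto. }
    { intros v' [l' [Hl' ->]]; rewrite (Epi_Epi_aux zero_src zero_src_le) by lia.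
      apply (Epi_aux0_le_part s); auto; lia. }
    rewrite (Epi_Epi_aux zero_src zero_src_le) in Hv' by lia.
    destruct (incr_common_refinement 0 l ln Hl1 Hn1) as [c [Hc1 [Hc2 [Hc3 Hc4]]]]; [congruence |].
    exists c; split; [split; auto; congruence |].
    intros j Hj; destruct (Nat.eq_dec j n) as [-> | Hne].
    + eapply Rle_trans; [| apply (Epi_aux0_refine 0 ln c); auto; lia || congruence].
      unfold Nisio; lra.
    + eapply Rle_trans; [apply Hl3; lia |].
      apply (Epi_aux0_refine 0 l c); auto; lia || congruence.
Qed.

Lemma mexpv_Nisio0_le q h s i : P q -> 0 <= h -> 0 <= s -> (i < d)%nat ->
  mexpv d h q (fun j => Nisio d P zero_src s v j) i <= Nisio d P zero_src (h + s) v i.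
Proof.
  intros Hq Hh Hs Hi; apply le_epsilon; intros e He.
  destruct (Nisio0_approx_part s e d Hs He (le_n d)) as [l [[Hl1 Hl2] Hl3]].
  eapply Rle_trans.
  { apply (mexpv_mono d h q _ (fun j => Epi_aux d P zero_src 0 l v j + e)); auto.
    intros j Hj; specialize (Hl3 j Hj); lra. }
  rewrite mexpv_add_const; auto; apply Rplus_le_compat_r.
  eapply Rle_trans; [apply mexpv_le_Eh0; auto |].
  destruct Hh as [Hh | <-].
  - assert (Hp : is_part (h + s) (h :: map (fun y => y + h) l)).
    { pose proof (incr_map_shift 0 l h Hl1) as Hi1; pose proof (last_map_shift 0 l h) as Hi2.
      rewrite Rplus_0_l in Hi1, Hi2; split; [split; auto | rewrite last_cons, Hi2; lra]. }
    eapply Rle_trans; [| apply (Epi_aux0_le_Nisio (h + s) _ i Hi Hp)].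
    cbn [Epi_aux]; rewrite Rminus_0_r.
    pose proof (Epi_aux_map_shift d P zero_src 0 l h v) as Hs2; rewrite Rplus_0_l in Hs2.
    rewrite Hs2; lra.
  - rewrite Rplus_0_l, (Eh_0 zero_src zero_src_le); auto.
    apply Epi_aux0_le_Nisio; auto; split; auto.
Qed.

End Sigma.

Section MainEstimate.
Variable f : mat -> vec.
Hypothesis Hfle : forall q, P q -> forall i, (i < d)%nat -> f q i <= 0.
Variable w : vec.
Variable C : R.
Hypothesis HC : forall q, P q -> forall l, (l < d)%nat -> Rabs (mv d q w l) <= C.
Variable u0 : vec.
Hypothesis Hw : forall q, P q -> forall j, (j < d)%nat -> mv d q u0 j + f q j <= w j.

(* [Sigma(s) w] extended to [s < 0] by its value at [0], so that Coquelicot's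
   continuity and integrability lemmas apply on all of [R]. *)
Definition sigma_ext (j : nat) (s : R) := Nisio d P zero_src (Rmax s 0) w j.

Lemma continuous_sigma_ext j x : (j < d)%nat -> continuous (sigma_ext j) x.
Proof.
  intros Hj; apply continuity_pt_filterlim.
  assert (HC0 : 0 <= C) by (eapply Rle_trans; [apply Rabs_pos | apply (HC q0 Hq0 j Hj)]).
  apply (limit1_in_lipschitz _ _ C); auto; intros y _; unfold sigma_ext.
  eapply Rle_trans; [apply Nisio0_lipschitz; auto; apply Rmax_r |].
  apply Rmult_le_compat_l; auto.
  unfold Rmax; destruct (Rle_dec x 0), (Rle_dec y 0); unfold Rabs;
    repeat destruct Rcase_abs; lra.
Qed.

Lemma ex_RInt_sigma_ext j a b : (j < d)%nat -> ex_RInt (sigma_ext j) a b.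
Proof.
  intros Hj; apply (@ex_RInt_continuous R_CompleteNormedModule); intros; apply continuous_sigma_ext; auto.
Qed.

Lemma Eh_le_RInt_sigma h i : 0 <= h -> (i < d)%nat ->
  Eh d P f h u0 i <= u0 i + RInt (sigma_ext i) 0 h.
Proof.
  intros Hh Hi; apply Eh_le; auto; intros q Hq.
  enough (Sq d q (f q) h u0 i - u0 i <= RInt (sigma_ext i) 0 h) by lra.
  rewrite Sq_sub_RInt; auto.
  apply RInt_le; auto; [apply ex_RInt_mexpv | apply ex_RInt_sigma_ext |]; auto.
  intros s Hs; eapply Rle_trans; [apply (mexpv_mono d s q _ w); auto; lra |].
  eapply Rle_trans; [apply (mexpv_le_Eh0 s w i q); auto; lra |].
  unfold sigma_ext; rewrite Rmax_left by lra.
  replace s with (s - 0) at 1 by ring.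
  change (Eh d P zero_src (s - 0) w i) with (Epi_aux d P zero_src 0 [s] w i).
  apply (Epi_aux0_le_Nisio w C HC); auto; split; simpl; auto; lra.
Qed.

Lemma Eh0_RInt_sigma_le h r z i : 0 <= h -> 0 <= r -> (i < d)%nat ->
  (forall j, (j < d)%nat -> z j = RInt (sigma_ext j) 0 r) ->
  Eh d P zero_src h z i <= RInt (sigma_ext i) h (h + r).
Proof.
  intros Hh Hr Hi Hz; apply Eh0_le; auto; intros q Hq.
  set (g := fun j s => mexpv d h q (unit_vec j) i * sigma_ext j s).
  assert (Hg : forall j, (j < d)%nat -> ex_RInt (g j) 0 r)
    by (intros j Hj; apply (@ex_RInt_scal R_NormedModule), ex_RInt_sigma_ext; auto).
  destruct (RInt_rsum d g 0 r Hg) as [Hex Heq].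
  destruct (RInt_shift (sigma_ext i) h r (ex_RInt_sigma_ext i _ _ Hi)) as [Hex' Heq'].
  rewrite mexpv_unit_vec, <- Heq'; auto.
  rewrite (rsum_ext d _ (fun j => RInt (g j) 0 r)), <- Heq.
  2: { intros j Hj; unfold g; rewrite (@RInt_scal R_CompleteNormedModule) by (apply ex_RInt_sigma_ext; auto).
       rewrite Hz; auto; unfold scal; simpl; unfold mult; simpl; ring. }
  apply RInt_le; auto; intros s Hs; unfold g.
  rewrite (rsum_ext d _ (fun j => sigma_ext j s * mexpv d h q (unit_vec j) i)) by (intros; ring).
  rewrite <- (mexpv_unit_vec d h q (fun j => sigma_ext j s)); auto.
  unfold sigma_ext; rewrite !Rmax_left, Rplus_comm by lra.
  apply (mexpv_Nisio0_le w C HC); auto; lra.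
Qed.

Lemma Epi_aux_le_RInt_sigma p l : incr p l -> forall i, (i < d)%nat ->
  Epi_aux d P f p l u0 i <= u0 i + RInt (sigma_ext i) 0 (last l p - p).
Proof.
  revert p; induction l as [| x r IH]; intros p Hl i Hi.
  - simpl; replace (p - p) with 0 by ring; rewrite RInt_point; unfold zero; simpl; lra.
  - destruct Hl as [H1 H2]; rewrite last_cons; cbn [Epi_aux].
    assert (Hr : x <= last r x) by (apply incr_last_ge; auto).
    specialize (IH x H2).
    eapply Rle_trans.
    { apply (Eh_mono f Hfle (x - p) _ (fun j => u0 j + RInt (sigma_ext j) 0 (last r x - x)));
        auto; try lra; intros j Hj; apply IH; auto. }
    eapply Rle_trans; [apply Eh_add_le; auto; lra |].
    eapply Rle_trans.
    { apply Rplus_le_compat; [apply Eh_le_RInt_sigma; auto; lra |].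
      apply (Eh0_RInt_sigma_le (x - p) (last r x - x)); auto; lra. }
    replace (last r x - p) with ((x - p) + (last r x - x)) by ring.
    rewrite <- (RInt_Chasles (sigma_ext i) 0 (x - p) (x - p + (last r x - x))) by (apply ex_RInt_sigma_ext; auto).
    unfold plus; simpl; lra.
Qed.

Lemma Nisio_le_RInt_sigma t i : 0 <= t -> (i < d)%nat ->
  Nisio d P f t u0 i <= u0 i + RInt (sigma_ext i) 0 t.
Proof.
  intros Ht Hi; apply vsup_le.
  - destruct (is_part_exists t Ht) as [l Hl]; exists (Epi d P f l u0), l; auto.
  - intros v' [l [[Hl1 Hl2] ->]]; rewrite (Epi_Epi_aux f Hfle) by auto.
    pose proof (Epi_aux_le_RInt_sigma 0 l Hl1 i Hi) as H; rewrite Hl2, Rminus_0_r in H; auto.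
Qed.

End MainEstimate.

End Operators.

Lemma uniform_bound_fin n (Q : nat -> R -> Prop) :
  (forall l, (l < n)%nat -> exists C, Q l C) -> (forall l C C', Q l C -> C <= C' -> Q l C') ->
  exists C, forall l, (l < n)%nat -> Q l C.
Proof.
  intros H Hm; induction n; [exists 0; intros; lia |].
  destruct IHn as [C1 HC1]; [intros; apply H; lia |].
  destruct (H n (Nat.lt_succ_diag_r n)) as [C2 HC2].
  exists (Rmax C1 C2); intros l Hl; destruct (Nat.eq_dec l n) as [-> | Hne].
  - apply (Hm n C2); auto; apply Rmax_r.
  - apply (Hm l C1); [apply HC1; lia | apply Rmax_l].
Qed.

(* Upper bounds on [q u + f_q] and [q (-u) + f_q], together with [|f_q| <= Cf],
   bound [|q u|] uniformly in [q]. *)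
Lemma mv_uniform_bound d P f Cf u :
  (forall (u : vec) i, (i < d)%nat -> exists M, forall q, P q -> mv d q u i + f q i <= M) ->
  (forall q, P q -> forall i, (i < d)%nat -> Rabs (f q i) <= Cf) ->
  exists C, forall q, P q -> forall l, (l < d)%nat -> Rabs (mv d q u l) <= C.
Proof.
  intros Hfin HCf.
  destruct (uniform_bound_fin d (fun l C => forall q, P q -> Rabs (mv d q u l) <= C)) as [C HC].
  - intros l Hl; destruct (Hfin u l Hl) as [M1 H1].
    destruct (Hfin (fun j => -1 * u j + 0 * u j) l Hl) as [M2 H2].
    exists (Rmax (M1 + Cf) (M2 + Cf)); intros q Hq.
    specialize (H1 q Hq); specialize (H2 q Hq); rewrite mv_lin in H2.
    pose proof (HCf q Hq l Hl) as Hf; apply Rabs_le_between in Hf.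
    pose proof (Rmax_l (M1 + Cf) (M2 + Cf)); pose proof (Rmax_r (M1 + Cf) (M2 + Cf)).
    apply Rabs_le; lra.
  - intros l C C' H1 H2 q Hq; eapply Rle_trans; eauto.
  - exists C; intros q Hq l Hl; apply HC; auto.
Qed.

Lemma Qop_ge d P f u q j : (exists M, forall q, P q -> mv d q u j + f q j <= M) -> P q ->
  mv d q u j + f q j <= Qop d P f u j.
Proof.
  intros [M HM] Hq; apply (vsup_ub _ j M (fun i => mv d q u i + f q i)); [| exists q; auto].
  intros v' [q' [Hq' ->]]; auto.
Qed.

Theorem mainTheorem10 (d : nat) (P : mat -> Prop) (f : mat -> vec) (q0 : mat)
  (HQ : forall q, P q -> Qmatrix d q)
  (Hq0 : P q0)
  (Hf0 : forall i, (i < d)%nat -> f q0 i = 0)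
  (Hfle : forall q, P q -> forall i, (i < d)%nat -> f q i <= 0)
  (Hfin : forall (u : vec) i, (i < d)%nat ->
            exists M, forall q, P q -> mv d q u i + f q i <= M)
  (Hbdd : exists C, forall q, P q -> forall i, (i < d)%nat -> Rabs (f q i) <= C) :
  (forall (v : vec) i, (i < d)%nat -> forall s, 0 <= s ->
     limit1_in (fun s' => Nisio d P (fun _ _ => 0) s' v i) (fun x => 0 <= x)
               (Nisio d P (fun _ _ => 0) s v i) s)
  /\
  (forall (u0 : vec) t, 0 <= t -> forall i, (i < d)%nat ->
     exists pr : Riemann_integrable
                   (fun s => Nisio d P (fun _ _ => 0) s (Qop d P f u0) i) 0 t,
       Nisio d P f t u0 i - u0 i <= RiemannInt pr).
Proof.
  destruct Hbdd as [Cf HCf]; split.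
  - intros v i Hi s Hs; destruct (mv_uniform_bound d P f Cf v Hfin HCf) as [C HC].
    apply (limit1_in_lipschitz (fun s' => Nisio d P zero_src s' v i) _ C);
      [eapply Rle_trans; [apply Rabs_pos | apply (HC q0 Hq0 i Hi)] |].
    intros x Hx; apply (Nisio0_lipschitz d P q0 HQ Hq0 v C HC); auto.
  - intros u0 t Ht i Hi; set (w := Qop d P f u0).
    destruct (mv_uniform_bound d P f Cf w Hfin HCf) as [C HC].
    assert (Hsig : forall x, Rmin 0 t < x < Rmax 0 t ->
              sigma_ext d P w i x = Nisio d P zero_src x w i).
    { intros x Hx; rewrite Rmin_left in Hx by auto; unfold sigma_ext; rewrite Rmax_left; lra. }
    assert (Hex : ex_RInt (fun s => Nisio d P zero_src s w i) 0 t)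
      by (eapply ex_RInt_ext; [apply Hsig | apply (ex_RInt_sigma_ext d P q0 HQ Hq0 w C HC); auto]).
    exists (ex_RInt_Reals_0 _ _ _ Hex); rewrite <- RInt_Reals, <- (RInt_ext _ _ _ _ Hsig).
    enough (Nisio d P f t u0 i <= u0 i + RInt (sigma_ext d P w i) 0 t) by lra.
    apply (Nisio_le_RInt_sigma d P q0 HQ Hq0 f Hfle w C HC); auto.
    intros q Hq j Hj; apply Qop_ge; auto.
Qed.
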